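(* Let $H$ be a finite group, $N$ a normal subgroup of $H$, and let $M_1, \dots, M_k$ be maximal subgroups of $H$ in general position. Then the $M_i$ can be reindexed and an integer $l$ with $0 \le l \le k$ chosen so that $\{M_1 \cap N, \dots, M_l \cap N\}$ is in general position and, for every $j > l$, $M_j \cap N \supseteq \bigcap_{1 \leq i \leq l} (M_i \cap N)$. Moreover, for such an arrangement, if $\pi : H \to H/N$ is the projection and $R = \bigcap_{1 \le i \le l} M_i$, then the subgroups $\pi(R \cap M_j)$, $l < j \le k$, of $H/N$ are in general position.
   Context: All groups are finite. A finite set $\{H_1,\dots,H_n\}$ of subgroups of a group $G$ is in general position if for every $1 \le j \le n$, $\bigcap_{i \neq j} H_i \supsetneq \bigcap_{i} H_i$. *)

From mathcomp Require Import all_boot all_fingroup all_solvable.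
Set Implicit Arguments. Unset Strict Implicit. Unset Printing Implicit Defensive.

Local Open Scope group_scope.

(* General position of an indexed family [A i], i \in P, of subgroups of an
   ambient group G: for every j in P, the intersection of the A i with i in P,
   i <> j, strictly contains the intersection of all A i, i in P.
   Intersections are taken inside the ambient G (so the empty intersection
   is G itself). *)
Definition gen_pos (gT : finGroupType) (I : finType) (G : {set gT})
    (P : {set I}) (A : I -> {set gT}) : Prop :=
  forall j, j \in P ->
    (G :&: \bigcap_(i in P) A i) \proper (G :&: \bigcap_(i in P | i != j) A i).

From mathcomp Require Import all_boot all_fingroup all_solvable.

Set Implicit Arguments.
Unset Strict Implicit.
Unset Printing Implicit Defensive.

Local Open Scope group_scope.

(* Take S minimal among the index sets giving the same intersection of the
   M i :&: N as all of them.  For the quotient, a witness x of general position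
   of the M i at j lies in R and in every M i with i <> j; if its coset were in
   (R :&: M j) / N, then x = n y with y in R :&: M j and n in R :&: N, which lies
   in M j by the choice of S, so x would lie in M j. *)

Section GeneralPosition.

Variables (gT : finGroupType) (I : finType).
Implicit Types (G : {set gT}) (P S : {set I}) (A : I -> {set gT}).

Lemma setI_bigcapD1 G P A j : j \in P ->
  G :&: \bigcap_(i in P) A i = A j :&: (G :&: \bigcap_(i in P | i != j) A i).
Proof. by move=> jP; rewrite (bigD1 j) //= setICA. Qed.

Lemma gen_posP G P A :
  gen_pos G P A <->
  (forall j, j \in P -> ~~ (G :&: \bigcap_(i in P | i != j) A i \subset A j)).
Proof.
split=> gpA j jP; last by rewrite (setI_bigcapD1 _ _ jP) properIr ?gpA.
apply/negP=> sub; have := gpA j jP.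
by rewrite (setI_bigcapD1 _ _ jP) (setIidPr sub) properxx.
Qed.

(* A subfamily that is minimal among those with the same intersection is in
   general position: dropping any member would leave the intersection unchanged. *)
Lemma gen_pos_subfamily G P A :
  exists S, [/\ S \subset P, gen_pos G S A &
                G :&: \bigcap_(i in S) A i = G :&: \bigcap_(i in P) A i].
Proof.
pose same_cap S := (S \subset P) && (G :&: \bigcap_(i in S) A i
                                      == G :&: \bigcap_(i in P) A i).
have sameP : same_cap P by rewrite /same_cap subxx eqxx.
case: (arg_minnP (fun S => #|S|) sameP) => S /andP[sSP /eqP capS] minS.
exists S; split=> //; apply/gen_posP=> j jS; apply/negP=> sub.
have sameSj : same_cap (S :\ j).
  rewrite /same_cap (subset_trans (subD1set S j)) //= -capS.
  rewrite (setI_bigcapD1 _ _ jS) (setIidPr sub).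
  by apply/eqP; congr (_ :&: _); apply: eq_bigl => i; rewrite in_setD1 andbC.
by have := minS _ sameSj; rewrite (cardsD1 j S) jS ltnn.
Qed.

End GeneralPosition.

Lemma mem_of_coset_quotientI (gT : finGroupType) (N R K : {group gT}) x :
  R \subset 'N(N) -> R :&: N \subset K -> x \in R ->
  coset N x \in (R :&: K) / N -> x \in K.
Proof.
move=> nNR sRNK xR.
have nNRK : R :&: K \subset 'N(N) by rewrite (subset_trans (subsetIl R K)).
move/(mem_morphpre (subsetP nNR x xR)); rewrite quotientK //.
case/mulsgP=> n y nN /setIP[yR yK] def_x.
have nR : n \in R by rewrite -(mulgK y n) -def_x groupM ?groupV.
by rewrite def_x groupM // (subsetP sRNK) ?inE ?nR.
Qed.

Lemma gen_pos_quotient_compl (gT : finGroupType) (I : finType)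
    (H N : {group gT}) (M : I -> {group gT}) (S : {set I}) :
  let R := H :&: \bigcap_(i in S) M i in
  H \subset 'N(N) -> gen_pos H [set: I] M ->
  (forall j, j \notin S -> R :&: N \subset M j) ->
  gen_pos (H / N) (~: S) (fun j => (R :&: M j) / N).
Proof.
move=> R nNH /gen_posP gpM sRN; apply/gen_posP=> j; rewrite inE => jS.
have /subsetPn[x /setIP[xH /bigcapP xM] xMj] := gpM j (in_setT j).
have xR : x \in R.
  rewrite inE xH; apply/bigcapP=> i iS; apply: xM; rewrite inE.
  by apply: contraNneq jS => <-.
apply/subsetPn; exists (coset N x); last first.
  apply: contra xMj; apply: mem_of_coset_quotientI (sRN j jS) xR.
  exact: subset_trans (subsetIl _ _) nNH.
rewrite inE mem_quotient //; apply/bigcapP=> i /andP[_ ij].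
by rewrite mem_quotient // inE xR xM // inE.
Qed.

Theorem lemma2p5 (gT : finGroupType) (H N : {group gT}) (k : nat)
    (M : 'I_k -> {group gT}) :
  N <| H ->
  (forall i, maximal (M i) H) ->
  gen_pos H [set: 'I_k] (fun i => gval (M i)) ->
  (exists S : {set 'I_k},
     gen_pos N S (fun i => M i :&: N) /\
     (forall j, j \notin S -> N :&: \bigcap_(i in S) (M i :&: N) \subset M j :&: N))
  /\
  (forall S : {set 'I_k},
     gen_pos N S (fun i => M i :&: N) ->
     (forall j, j \notin S -> N :&: \bigcap_(i in S) (M i :&: N) \subset M j :&: N) ->
     let R := H :&: \bigcap_(i in S) M i in
     gen_pos (H / N) (~: S) (fun j => (R :&: M j) / N)).
Proof.
move=> /normal_norm nNH _ gpM; split.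
  have [S [_ gpS capS]] := gen_pos_subfamily N [set: 'I_k] (fun i => M i :&: N).
  exists S; split=> // j _; rewrite capS.
  by apply: subset_trans (subsetIr _ _) _; apply: bigcap_inf.
move=> S _ sSN R; apply: gen_pos_quotient_compl nNH gpM _ => j /sSN sNj.
apply: subset_trans (subset_trans _ sNj) (subsetIl _ _).
apply/subsetP=> x /setIP[/setIP[_ /bigcapP xM] xN].
by rewrite inE xN; apply/bigcapP=> i iS; rewrite inE xM.
Qed.
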